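(* Assume $\rho_\alpha^{\mathrm{dir}}<1$ and fix $\varepsilon>0$ such that $\beta_\varepsilon:=\rho_\alpha^{\mathrm{dir}}+\varepsilon<1$. For integers $t\ge 0$ and $x\in\mathbb R^m$ define \[ V_\varepsilon^t(x):=\sum_{\ell=0}^{t}\beta_\varepsilon^{-2\ell}\max_{\pi_1,\dots,\pi_\ell\in\Theta}\big\|A_{\pi_\ell}\cdots A_{\pi_1}x\big\|_2^2, \] where the $\ell=0$ term is $\|x\|_2^2$, and $V_\varepsilon^\infty(x):=\lim_{t\to\infty}V_\varepsilon^t(x)$. Then the following hold. (i) $V_\varepsilon^\infty$ is well defined, and there exists $C_\varepsilon\ge 1$ such that $\|x\|_2^2\le V_\varepsilon^\infty(x)\le C_\varepsilon\|x\|_2^2$ for all $x\in\mathbb R^m$. (ii) $p_\varepsilon(x):=\sqrt{V_\varepsilon^\infty(x)}$ is a norm on $\mathbb R^m$. (iii) For every stochastic policy $\mu$ and every $x\in\mathbb R^m$, \[ V_\varepsilon^\infty(A_\mu x)\le \beta_\varepsilon^2\big(V_\varepsilon^\infty(x)-\|x\|_2^2\big)\le \beta_\varepsilon^2 V_\varepsilon^\infty(x). \] Consequently $p_\varepsilon(A_\mu x)\le\beta_\varepsilon p_\varepsilon(x)$ for all $x\in\mathbb R^m$. (iv) $T_\alpha$ is a global contraction in $p_\varepsilon$: $p_\varepsilon(T_\alpha(\theta)-T_\alpha(\bar\theta))\le\beta_\varepsilon p_\varepsilon(\theta-\bar\theta)$ for all $\theta,\bar\theta\in\mathbb R^m$.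 (v) Hence there exists a unique projected Bellman fixed point $\theta^\star$, that is, a unique $\theta^\star$ with $g(\theta^\star)=0$. (vi) For the deterministic recursion $\theta_{k+1}=T_\alpha(\theta_k)$, $k\ge 0$, started from any $\theta_0\in\mathbb R^m$, we have \[ V_\varepsilon^\infty(\theta_k-\theta^\star)\le\beta_\varepsilon^{2k}V_\varepsilon^\infty(\theta_0-\theta^\star), \] \[ \|\theta_k-\theta^\star\|_2\le\sqrt{C_\varepsilon}\,\beta_\varepsilon^k\|\theta_0-\theta^\star\|_2, \] \[ \|\Phi\theta_k-\Phi\theta^\star\|_2\le\|\Phi\|_2\sqrt{C_\varepsilon}\,\beta_\varepsilon^k\|\theta_0-\theta^\star\|_2. \]
   Context: Consider a finite discounted MDP with state space $\mathcal S=\{1,\dots,|\mathcal S|\}$, action space $\mathcal A=\{1,\dots,|\mathcal A|\}$, transition probabilities $P(s'\mid s,a)$, real rewards $r(s,a,s')$, expected reward $R(s,a)=\sum_{s'}P(s'\mid s,a)r(s,a,s')$, and discount factor $\gamma\in(0,1)$. State-action vectors are ordered as $(1,1),(2,1),\dots,(|\mathcal S|,1),(1,2),\dots,(|\mathcal S|,|\mathcal A|)$. The matrix $P\in\mathbb R^{|\mathcal S||\mathcal A|\times|\mathcal S|}$ has row $(s,a)$ equal to $P(\cdot\mid s,a)$, and $R\in\mathbb R^{|\mathcal S||\mathcal A|}$ has entries $R(s,a)$. A stochastic policy is a map $\mu:\mathcal S\to\Delta_{|\mathcal A|}$, where $\Delta_n$ is the probability simplex in $\mathbb R^n$. The set $\Theta$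 is the finite set of deterministic stationary policies $\pi:\mathcal S\to\mathcal A$; each is identified with the stochastic policy putting mass $1$ on $\pi(s)$. For a stochastic policy $\mu$, $\Pi^\mu\in\mathbb R^{|\mathcal S|\times|\mathcal S||\mathcal A|}$ is the matrix with entry $\mu(a\mid s)$ in row $s$ and column $(s,a)$, and zeros elsewhere. The feature matrix $\Phi\in\mathbb R^{|\mathcal S||\mathcal A|\times m}$ has full column rank and rows $\phi(s,a)^\top$. For $\theta\in\mathbb R^m$, $V_\theta\in\mathbb R^{|\mathcal S|}$ is defined by $V_\theta(s)=\max_{a}\phi(s,a)^\top\theta$. The sampling distribution $d$ on $\mathcal S\times\mathcal A$ satisfies $d(s,a)>0$ for all $(s,a)$, and $D=\mathrm{diag}(d(s,a))$ in the same ordering. The step size is $\alpha\in(0,1)$. Define the projected Bellman residual $g(\theta):=\Phi^\top D(R+\gamma PV_\theta-\Phi\theta)$ and the map $T_\alpha(\theta):=\theta+\alpha g(\theta)$. A projected Bellman fixed point is a $\theta^\star$ with $g(\theta^\star)=0$. For a stochastic policy $\mu$, define $A_\mu:=I-\alpha\Phi^\top D\Phi+\alpha\gamma\Phi^\top DP\Pi^\mu\Phi\in\mathbb R^{m\times m}$, and let $\mathcal A_\alpha:=\{A_\pi:\pi\in\Theta\}$. The joint spectral radius of a bounded set $\mathcal H$ of square matrices is $\mathrm{JSR}(\mathcal H):=\lim_{k\to\infty}\sup_{B_1,\dots,B_k\in\mathcal H}\|B_k\cdots B_1\|^{1/k}$. Set $\rho_\alpha^{\mathrm{dir}}:=\mathrm{JSR}(\mathcal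 A_\alpha)$. *)

From HB Require Import structures.
From mathcomp Require Import all_boot all_order all_algebra.
From mathcomp Require Import all_classical all_reals all_analysis.
Set Implicit Arguments. Unset Strict Implicit. Unset Printing Implicit Defensive.
Import Order.TTheory GRing.Theory Num.Theory.
Import numFieldNormedType.Exports.
Local Open Scope classical_set_scope.
Local Open Scope ring_scope.

(* Conventions.
   - States: 'I_nS ; actions: 'I_nA.+1 (the action space is nonempty).
   - State-action pairs are indexed by 'I_(nA.+1 * nS), the pair (s,a)
     having index  mxvec_index a s = a * nS + s, which is exactly the
     ordering (1,1),(2,1),...,(|S|,1),(1,2),... of the paper.
   - Vectors of R^n are column vectors 'cV[R]_n. *)

Section Defs.
Variable R : realType.

Definition norm2sq n (x : 'cV[R]_n) : R := \sum_(i < n) (x i 0) ^+ 2.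
Definition norm2 n (x : 'cV[R]_n) : R := Num.sqrt (norm2sq x).

Definition opnorm2 p q (M : 'M[R]_(p, q)) : R :=
  sup [set norm2 (M *m x) | x in [set x : 'cV[R]_q | norm2 x <= 1]].

Definition is_norm m (p : 'cV[R]_m -> R) : Prop :=
  [/\ forall x, 0 <= p x,
      forall x, p x = 0 -> x = 0,
      forall (c : R) x, p (c *: x) = `|c| * p x &
      forall x y, p (x + y) <= p x + p y].

Definition sa_idx nS nA (s : 'I_nS) (a : 'I_nA.+1) : 'I_(nA.+1 * nS) :=
  mxvec_index a s.

Definition is_stoch_policy nS nA (mu : 'I_nS -> 'I_nA.+1 -> R) : Prop :=
  (forall s a, 0 <= mu s a) /\ (forall s, \sum_(a < nA.+1) mu s a = 1).

Definition detpol nS nA := {ffun 'I_nS -> 'I_nA.+1}.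

Definition det_to_stoch nS nA (pi : detpol nS nA) : 'I_nS -> 'I_nA.+1 -> R :=
  fun s a => (a == pi s)%:R.

Definition PiMat nS nA (mu : 'I_nS -> 'I_nA.+1 -> R) : 'M[R]_(nS, nA.+1 * nS) :=
  \matrix_(s < nS, k < nA.+1 * nS)
     \sum_(a < nA.+1) (if k == sa_idx s a then mu s a else 0).

Definition Rexp nS nA (P : 'M[R]_(nA.+1 * nS, nS))
  (r : 'I_(nA.+1 * nS) -> 'I_nS -> R) : 'cV[R]_(nA.+1 * nS) :=
  \col_k \sum_(s' < nS) P k s' * r k s'.

Definition Dmat N (d : 'I_N -> R) : 'M[R]_N := diag_mx (\row_k d k).

Definition Vtheta nS nA m (Phi : 'M[R]_(nA.+1 * nS, m)) (theta : 'cV[R]_m)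
  : 'cV[R]_nS :=
  \col_s \big[Num.max/(Phi *m theta) (sa_idx s ord0) 0]_(a < nA.+1)
            (Phi *m theta) (sa_idx s a) 0.

Definition gres nS nA m (P : 'M[R]_(nA.+1 * nS, nS))
  (r : 'I_(nA.+1 * nS) -> 'I_nS -> R) (gamma : R)
  (Phi : 'M[R]_(nA.+1 * nS, m)) (d : 'I_(nA.+1 * nS) -> R)
  (theta : 'cV[R]_m) : 'cV[R]_m :=
  Phi^T *m Dmat d *m (Rexp P r + gamma *: (P *m Vtheta Phi theta) - Phi *m theta).

Definition Talpha nS nA m P r gamma Phi d (alpha : R) (theta : 'cV[R]_m) :=
  theta + alpha *: @gres nS nA m P r gamma Phi d theta.

Definition Amu nS nA m (P : 'M[R]_(nA.+1 * nS, nS)) (gamma : R)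
  (Phi : 'M[R]_(nA.+1 * nS, m)) (d : 'I_(nA.+1 * nS) -> R) (alpha : R)
  (mu : 'I_nS -> 'I_nA.+1 -> R) : 'M[R]_m :=
  1%:M - alpha *: (Phi^T *m Dmat d *m Phi)
       + (alpha * gamma) *: (Phi^T *m Dmat d *m P *m PiMat mu *m Phi).

(* A_{pi_l} ... A_{pi_1} for the sequence pi_1 = f 0, ..., pi_l = f (l-1) *)
Definition prodA nS nA m P gamma Phi d alpha l
  (f : {ffun 'I_l -> detpol nS nA}) : 'M[R]_m :=
  \prod_(i < l) @Amu nS nA m P gamma Phi d alpha (det_to_stoch (f (rev_ord i))).

(* joint spectral radius of A_alpha = {A_pi : pi in Theta} (w.r.t. the
   operator 2-norm; the sup over the finite set of products is a max) *)
Definition rho_dir nS nA m P gamma Phi d alpha : R :=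
  limn (fun k : nat =>
    (\big[Num.max/0]_(f : {ffun 'I_k -> detpol nS nA})
        opnorm2 (@prodA nS nA m P gamma Phi d alpha k f)) `^ (k%:R)^-1).

Definition Vt nS nA m P gamma Phi d alpha (beta : R) (t : nat)
  (x : 'cV[R]_m) : R :=
  \sum_(l < t.+1) beta ^- (2 * l) *
     \big[Num.max/0]_(f : {ffun 'I_l -> detpol nS nA})
        norm2sq (@prodA nS nA m P gamma Phi d alpha l f *m x).

Definition Vinf nS nA m P gamma Phi d alpha (beta : R) (x : 'cV[R]_m) : R :=
  limn (fun t => @Vt nS nA m P gamma Phi d alpha beta t x).

End Defs.

(* The products of the matrices A_pi have norms b_n = max ||A_pi_n ... A_pi_1|| that
   form a submultiplicative sequence, so by Fekete's lemma b_n^(1/n) converges to its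
   infimum rho_dir; as rho_dir < beta, b_n <= K (q beta)^n for some q < 1.  The terms
   of V(x) are therefore dominated by a geometric series, whence |x|^2 <= V(x) <= C |x|^2.
   A_mu is the mixture of the A_pi under the product measure prod_s mu(pi(s)|s), so by
   convexity of |.|^2 the l-th term of V(A_mu x) is at most beta^2 times the (l+1)-th
   term of V(x): this is (iii).  Since max_a is piecewise linear, T(th) - T(th') =
   A_mu (th - th') for a policy mu mixing greedy actions at th and th', so T is a
   beta-contraction for sqrt V; a large iterate of T then contracts the sup norm, and
   Banach's fixed point theorem gives theta*. *)

From HB Require Import structures.
From mathcomp Require Import all_boot all_order all_algebra.
From mathcomp Require Import all_classical all_reals all_analysis.
From mathcomp Require Import ring lra.
Import Order.TTheory GRing.Theory Num.Theory.
Import numFieldNormedType.Exports.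
Local Open Scope classical_set_scope.
Local Open Scope ring_scope.
Set Implicit Arguments. Unset Strict Implicit. Unset Printing Implicit Defensive.

Section EuclideanNorm.
Variable R : realType.
Implicit Types (I : finType) (n : nat).

Lemma sumr_sqr_ge0 I (a : I -> R) : 0 <= \sum_i a i ^+ 2.
Proof. by apply: sumr_ge0 => i _; exact: sqr_ge0. Qed.

Lemma cauchy_schwarz I (a b : I -> R) :
  (\sum_i a i * b i) ^+ 2 <= (\sum_i a i ^+ 2) * (\sum_i b i ^+ 2).
Proof.
set A := \sum_i a i ^+ 2; set B := \sum_i a i * b i; set C := \sum_i b i ^+ 2.
have [A0|A_neq0] := eqVneq A 0.
  have a0 i : a i = 0.
    apply/eqP; rewrite -sqrf_eq0; apply/eqP.
    exact: (psumr_eq0P (fun i _ => sqr_ge0 (a i)) A0).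
  by rewrite /B big1 ?expr0n ?A0 ?mul0r // => i _; rewrite a0 mul0r.
have A_gt0 : 0 < A by rewrite lt_def A_neq0 sumr_sqr_ge0.
have : 0 <= \sum_i (A * b i - B * a i) ^+ 2 by exact: sumr_sqr_ge0.
have -> : \sum_i (A * b i - B * a i) ^+ 2 = A * (A * C - B ^+ 2).
  transitivity (\sum_i (A ^+ 2 * b i ^+ 2 - 2 * A * B * (a i * b i) + B ^+ 2 * a i ^+ 2)).
    by apply: eq_bigr => i _; ring.
  rewrite !big_split /= sumrN -!mulr_sumr -/A -/B -/C; ring.
by rewrite pmulr_rge0 // subr_ge0 mulrC.
Qed.

Lemma minkowski I (a b c : I -> R) :
  (forall i, 0 <= c i <= a i + b i) ->
  Num.sqrt (\sum_i c i ^+ 2) <=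
  Num.sqrt (\sum_i a i ^+ 2) + Num.sqrt (\sum_i b i ^+ 2).
Proof.
move=> cab; have sa := sqrtr_ge0 (\sum_i a i ^+ 2).
have sb := sqrtr_ge0 (\sum_i b i ^+ 2).
rewrite -(ger0_norm (addr_ge0 sa sb)) -sqrtr_sqr ler_sqrt ?sqr_ge0 //.
apply: (@le_trans _ _ (\sum_i (a i + b i) ^+ 2)).
  apply: ler_sum => i _; have /andP[c0 cle] := cab i.
  by rewrite ler_sqr ?nnegrE // (le_trans c0).
have cs : \sum_i a i * b i <= Num.sqrt (\sum_i a i ^+ 2) * Num.sqrt (\sum_i b i ^+ 2).
  rewrite -sqrtrM ?sumr_sqr_ge0 //; apply: le_trans (ler_norm _) _.
  by rewrite -sqrtr_sqr ler_sqrt ?cauchy_schwarz // mulr_ge0 ?sumr_sqr_ge0.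
rewrite sqrrD !sqr_sqrtr ?sumr_sqr_ge0 //.
under eq_bigr do rewrite sqrrD.
rewrite !big_split /= mulr2n; lra.
Qed.

Lemma norm2sq_ge0 n (x : 'cV[R]_n) : 0 <= norm2sq x.
Proof. exact: sumr_sqr_ge0. Qed.

Lemma norm2_ge0 n (x : 'cV[R]_n) : 0 <= norm2 x.
Proof. exact: sqrtr_ge0. Qed.

Lemma sqr_norm2 n (x : 'cV[R]_n) : norm2 x ^+ 2 = norm2sq x.
Proof. by rewrite sqr_sqrtr // norm2sq_ge0. Qed.

Lemma norm2sqZ n (c : R) (x : 'cV[R]_n) : norm2sq (c *: x) = c ^+ 2 * norm2sq x.
Proof. by rewrite /norm2sq mulr_sumr; apply: eq_bigr => i _; rewrite mxE exprMn. Qed.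

Lemma norm2Z n (c : R) (x : 'cV[R]_n) : norm2 (c *: x) = `|c| * norm2 x.
Proof. by rewrite /norm2 norm2sqZ sqrtrM ?sqr_ge0 // sqrtr_sqr. Qed.

Lemma norm2sq_eq0 n (x : 'cV[R]_n) : norm2sq x = 0 -> x = 0.
Proof.
move=> x0; apply/matrixP => i j; rewrite (ord1 j) mxE.
apply/eqP; rewrite -sqrf_eq0; apply/eqP.
exact: (psumr_eq0P (fun i _ => sqr_ge0 (x i 0)) x0).
Qed.

Lemma norm2_eq0 n (x : 'cV[R]_n) : norm2 x = 0 -> x = 0.
Proof. by move=> x0; apply: norm2sq_eq0; rewrite -sqr_norm2 x0 expr0n. Qed.

Lemma norm2_0 n : norm2 (0 : 'cV[R]_n) = 0.
Proof. by rewrite /norm2 /norm2sq big1 ?sqrtr0 // => i _; rewrite mxE expr0n. Qed.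

Lemma norm2D n (x y : 'cV[R]_n) : norm2 (x + y) <= norm2 x + norm2 y.
Proof.
have absK (z : 'cV[R]_n) : norm2 z = Num.sqrt (\sum_i `|z i 0| ^+ 2).
  by congr Num.sqrt; apply: eq_bigr => i _; rewrite real_normK ?num_real.
rewrite !absK; apply: minkowski => i.
by rewrite normr_ge0 mxE ler_normD.
Qed.

Lemma norm2sq_convex I n (w : I -> R) (z : I -> 'cV[R]_n) :
  (forall i, 0 <= w i) -> \sum_i w i = 1 ->
  norm2sq (\sum_i w i *: z i) <= \sum_i w i * norm2sq (z i).
Proof.
move=> w0 w1; rewrite /norm2sq.
under [X in _ <= X]eq_bigr do rewrite mulr_sumr.
rewrite exchange_big /=; apply: ler_sum => k _.
rewrite summxE (eq_bigr (fun i => w i * z i k 0)); last by move=> i _; rewrite mxE.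
set M := \sum_i w i * z i k 0.
have : 0 <= \sum_i w i * (z i k 0 - M) ^+ 2 by apply: sumr_ge0 => i _; rewrite mulr_ge0 ?sqr_ge0.
have -> : \sum_i w i * (z i k 0 - M) ^+ 2 =
    \sum_i w i * z i k 0 ^+ 2 - 2 * M * M + M ^+ 2 * \sum_i w i.
  transitivity (\sum_i (w i * z i k 0 ^+ 2 - 2 * M * (w i * z i k 0) + M ^+ 2 * w i)).
    by apply: eq_bigr => i _; ring.
  by rewrite !big_split /= sumrN -!mulr_sumr.
rewrite w1; lra.
Qed.

Lemma coord_le_norm2 n (x : 'cV[R]_n) i : `|x i 0| <= norm2 x.
Proof.
rewrite -sqrtr_sqr ler_sqrt ?norm2sq_ge0 // /norm2sq (bigD1 i) //= lerDl.
apply: sumr_ge0 => j _; exact: sqr_ge0.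
Qed.

End EuclideanNorm.

Section OperatorNorm.
Variable R : realType.
Implicit Types (p q : nat).

Local Notation image_ball M := [set norm2 (M *m x) | x in [set x | norm2 x <= 1]].

Let image_ball_neq0 p q (M : 'M[R]_(p, q)) : image_ball M !=set0.
Proof. by exists (norm2 (M *m 0)), 0 => //=; rewrite norm2_0 ler01. Qed.

Let image_ball_ubound p q (M : 'M[R]_(p, q)) : has_ubound (image_ball M).
Proof.
exists (Num.sqrt (\sum_i \sum_j M i j ^+ 2)) => _ [x /= x1 <-].
have M0 : 0 <= \sum_i \sum_j M i j ^+ 2 by apply: sumr_ge0 => i _; exact: sumr_sqr_ge0.
apply: (@le_trans _ _ (Num.sqrt (\sum_i \sum_j M i j ^+ 2) * norm2 x)); last first.
  by rewrite ler_piMr // sqrtr_ge0.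
rewrite /norm2 -sqrtrM // ler_sqrt ?mulr_ge0 ?norm2sq_ge0 //.
rewrite /norm2sq mulr_suml; apply: ler_sum => i _; rewrite mxE.
exact: (cauchy_schwarz (fun j => M i j) (fun j => x j 0)).
Qed.

Lemma opnorm2_ub p q (M : 'M[R]_(p, q)) x : norm2 x <= 1 -> norm2 (M *m x) <= opnorm2 M.
Proof. by move=> x1; apply: ub_le_sup (image_ball_ubound M) _ _; exists x. Qed.

Lemma opnorm2_ge0 p q (M : 'M[R]_(p, q)) : 0 <= opnorm2 M.
Proof. by have := @opnorm2_ub _ _ M 0; rewrite mulmx0 !norm2_0; apply; rewrite ler01. Qed.

Lemma norm2_mulmx_le p q (M : 'M[R]_(p, q)) x : norm2 (M *m x) <= opnorm2 M * norm2 x.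
Proof.
have [x0|x_neq0] := eqVneq (norm2 x) 0.
  by rewrite x0 mulr0 (norm2_eq0 x0) mulmx0 norm2_0.
have x_gt0 : 0 < norm2 x by rewrite lt_def x_neq0 norm2_ge0.
have := @opnorm2_ub _ _ M ((norm2 x)^-1 *: x).
rewrite -scalemxAr !norm2Z ger0_norm ?invr_ge0 ?norm2_ge0 // mulVf //.
by move/(_ (lexx _)); rewrite ler_pdivrMl // mulrC.
Qed.

Lemma opnorm2_le p q (M : 'M[R]_(p, q)) c : 0 <= c ->
  (forall x, norm2 (M *m x) <= c * norm2 x) -> opnorm2 M <= c.
Proof.
move=> c0 Mc; apply: ge_sup (image_ball_neq0 M) _ => _ [x /= x1 <-].
by apply: le_trans (Mc x) _; rewrite ler_piMr.
Qed.

Lemma opnorm2M p q r (M : 'M[R]_(p, q)) (N : 'M[R]_(q, r)) :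
  opnorm2 (M *m N) <= opnorm2 M * opnorm2 N.
Proof.
apply: opnorm2_le => [|x]; first by rewrite mulr_ge0 ?opnorm2_ge0.
rewrite -mulmxA; apply: le_trans (norm2_mulmx_le _ _) _.
by rewrite -mulrA ler_wpM2l ?opnorm2_ge0 ?norm2_mulmx_le.
Qed.

Lemma opnorm2_1 p : opnorm2 (1%:M : 'M[R]_p) <= 1.
Proof. by apply: opnorm2_le => [|x]; rewrite ?ler01 // mul1mx mul1r. Qed.

End OperatorNorm.

Lemma geometric_lt (R : realType) (z e : R) : 0 <= z -> z < 1 -> 0 < e ->
  exists N, forall n, (N <= n)%N -> z ^+ n < e.
Proof.
move=> z0 z1 e0; have z_lt1 : `|z| < 1 by rewrite ger0_norm.
have /cvgrPdist_lt/(_ e e0) [N _ zN] := cvg_geometric 1 z_lt1.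
by exists N => n /zN; rewrite /= /geometric mul1r sub0r normrN ger0_norm // exprn_ge0.
Qed.

Section Fekete.
Variable R : realType.
Variable b : nat -> R.
Hypotheses (b_ge0 : forall n, 0 <= b n) (b0_le1 : b 0%N <= 1)
  (bD : forall k n, b (k + n)%N <= b n * b k).

Let root n := b n `^ n%:R^-1.
Let roots := [set root n | n in [set n | (0 < n)%N]].

Lemma submult_block_bound k0 (g M : R) : (0 < k0)%N -> 0 < g ->
  b k0 <= g ^+ k0 -> g <= M -> b 1%N <= M ->
  forall n, b n <= g ^+ n * (M / g) ^+ k0.
Proof.
move=> k0_gt0 g_gt0 bk0 gM b1M n.
have M_gt0 : 0 < M by apply: lt_le_trans gM.
have b_blocks q : b (q * k0)%N <= g ^+ (q * k0).
  elim: q => [|q IH]; first by rewrite mul0n expr0.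
  rewrite mulSn; apply: le_trans (bD _ _) _.
  by rewrite exprD mulrC ler_pM.
have b_rem r : b r <= M ^+ r.
  elim: r => [|r IH]; first by rewrite expr0.
  rewrite -addn1 addnC; apply: le_trans (bD _ _) _.
  by rewrite add1n exprSr ler_pM.
rewrite (divn_eq n k0) addnC; set q := (n %/ k0)%N; set r := (n %% k0)%N.
apply: le_trans (bD _ _) _.
have r_le : (r <= k0)%N by rewrite ltnW // ltn_pmod.
have -> : g ^+ (r + q * k0) * (M / g) ^+ k0 =
    g ^+ (q * k0) * (M ^+ r * (M / g) ^+ (k0 - r)).
  have -> : M ^+ r = g ^+ r * (M / g) ^+ r.
    by rewrite -exprMn mulrCA divff ?mulr1 ?lt0r_neq0.
  have -> : (M / g) ^+ k0 = (M / g) ^+ r * (M / g) ^+ (k0 - r).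
    by rewrite -exprD subnKC.
  by rewrite exprD; ring.
apply: ler_pM; rewrite ?b_ge0 //.
rewrite -[X in X <= _]mulr1; apply: ler_pM; rewrite ?b_ge0 ?ler01 ?b_rem //.
by apply: exprn_ege1; rewrite ler_pdivlMr // mul1r.
Qed.

Let roots_neq0 : roots !=set0.
Proof. by exists (root 1%N), 1%N. Qed.

Let inf_roots_ge0 : 0 <= inf roots.
Proof. by apply: lb_le_inf roots_neq0 _ => _ [n _ <-]; exact: powR_ge0. Qed.

Let powR_inv_natK (y : R) n : 0 <= y -> (0 < n)%N -> (y `^ n%:R^-1) ^+ n = y.
Proof.
move=> y0 n0; rewrite -powR_mulrn ?powR_ge0 // -powRrM mulVf ?powRr1 //.
by rewrite pnatr_eq0 -lt0n.
Qed.

Let block_of_root k0 (g : R) : (0 < k0)%N -> root k0 <= g -> b k0 <= g ^+ k0.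
Proof.
move=> k0_gt0 rg; rewrite -(powR_inv_natK (b_ge0 k0) k0_gt0).
by rewrite lerXn2r ?nnegrE ?powR_ge0 // (le_trans (powR_ge0 _ _) rg).
Qed.

Let pow_natK (x : R) n : 0 <= x -> (0 < n)%N -> (x ^+ n) `^ n%:R^-1 = x.
Proof.
move=> x0 n0; rewrite -powR_mulrn // -powRrM mulfV ?powRr1 //.
by rewrite pnatr_eq0 -lt0n.
Qed.

Lemma submult_root_cvg : root n @[n --> \oo] --> inf roots.
Proof.
apply/cvgrPdist_le => e e_gt0; set L := inf roots; have L_ge0 : 0 <= L := inf_roots_ge0.
set g := L + e / 2.
have [_ [k0 /= k0_gt0 <-] rk0] : exists2 y, roots y & y < g.
  by apply: inf_lt roots_neq0 _; rewrite /g; lra.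
have g_gt0 : 0 < g by rewrite /g; lra.
set M := Num.max g (b 1%N).
have gM : g <= M by rewrite le_max lexx.
have b1M : b 1%N <= M by rewrite le_max lexx orbT.
have bnd := submult_block_bound k0_gt0 g_gt0 (block_of_root k0_gt0 (ltW rk0)) gM b1M.
set K := (M / g) ^+ k0 in bnd.
have K_gt0 : 0 < K by rewrite exprn_gt0 // divr_gt0 // (lt_le_trans g_gt0 gM).
have Le_gt0 : 0 < L + e by lra.
(* [K g^n = K z^n (L + e)^n] with [z < 1]: the constant [K] is eventually absorbed *)
set z := g / (L + e).
have z_ge0 : 0 <= z by rewrite divr_ge0 ?ltW.
have z_lt1 : z < 1 by rewrite ltr_pdivrMr // mul1r /g; lra.
have Ki_gt0 : 0 < K^-1 by rewrite invr_gt0.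
have [N zN] := geometric_lt z_ge0 z_lt1 Ki_gt0.
exists (maxn N 1) => // n /= /[!geq_max] /andP[nN n_gt0].
have zK : z ^+ n * K <= 1 by rewrite -ler_pdivlMr // mul1r; exact/ltW/zN.
have bn : b n <= (L + e) ^+ n.
  apply: le_trans (bnd n) _.
  rewrite -[g](mulfVK (lt0r_neq0 Le_gt0)) -/z exprMn (mulrC (z ^+ n)) -mulrA.
  by rewrite -[X in _ <= X]mulr1 ler_wpM2l // exprn_ge0 // ltW.
have root_le : root n <= L + e.
  rewrite -(pow_natK (ltW Le_gt0) n_gt0) ge0_ler_powR ?nnegrE ?invr_ge0 ?ler0n //.
  exact: exprn_ge0 (ltW Le_gt0).
have L_le : L <= root n by apply: ge_inf; [exists 0 => _ [k _ <-]; exact: powR_ge0 | exists n].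
by rewrite ler0_norm; lra.
Qed.

Lemma submult_root_lim : limn root = inf roots.
Proof. exact: cvg_lim submult_root_cvg. Qed.

Lemma submult_root_lim_ge0 : 0 <= limn root.
Proof. by rewrite submult_root_lim. Qed.

Lemma submult_geometric_bound (beta : R) : 0 < beta -> limn root < beta ->
  exists q K, [/\ 0 < q, q < 1, 0 < K & forall n, b n <= K * (q * beta) ^+ n].
Proof.
move=> beta_gt0; rewrite submult_root_lim => /(inf_lt roots_neq0).
move=> [_ [k0 /= k0_gt0 <-] rk0].
set g := Num.max (root k0) (beta / 2).
have g_gt0 : 0 < g by rewrite lt_max divr_gt0 ?orbT.
have g_lt : g < beta by rewrite gt_max rk0 /=; lra.
set M := Num.max g (b 1%N).
have gM : g <= M by rewrite le_max lexx.
have b1M : b 1%N <= M by rewrite le_max lexx orbT.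
have rk0g : root k0 <= g by rewrite le_max lexx.
have bnd := submult_block_bound k0_gt0 g_gt0 (block_of_root k0_gt0 rk0g) gM b1M.
exists (g / beta), ((M / g) ^+ k0); split.
- by rewrite divr_gt0.
- by rewrite ltr_pdivrMr // mul1r.
- by rewrite exprn_gt0 // divr_gt0 // (lt_le_trans g_gt0 gM).
by move=> n; rewrite divfK ?lt0r_neq0 // mulrC; exact: bnd.
Qed.

End Fekete.

Section PolicyProducts.
Variables (R : realType) (nS nA m : nat) (P : 'M[R]_(nA.+1 * nS, nS)) (gamma : R)
  (Phi : 'M[R]_(nA.+1 * nS, m)) (d : 'I_(nA.+1 * nS) -> R) (alpha : R).

Local Notation policy := (detpol nS nA).
Local Notation prodA := (prodA P gamma Phi d alpha).

Definition Adet (pi : policy) := Amu P gamma Phi d alpha (det_to_stoch R pi).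

Definition fbehead l (f : {ffun 'I_l.+1 -> policy}) : {ffun 'I_l -> policy} :=
  [ffun i => f (lift ord0 i)].

Definition fcons l (pi : policy) (h : {ffun 'I_l -> policy}) : {ffun 'I_l.+1 -> policy} :=
  [ffun i => if unlift ord0 i is Some j then h j else pi].

Lemma prodA0 (f : {ffun 'I_0 -> policy}) : prodA f = 1%:M.
Proof. by rewrite /prodA big_ord0. Qed.

Lemma prodA_behead l (f : {ffun 'I_l.+1 -> policy}) :
  prodA f = prodA (fbehead f) *m Adet (f ord0).
Proof.
rewrite /prodA big_ord_recr /= mulmxE; congr (_ * _).
  apply: eq_bigr => i _; rewrite /fbehead ffunE; congr (Amu _ _ _ _ _ (det_to_stoch R (f _))).
  by apply: val_inj; rewrite /= /bump /= add1n subSS subnSK.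
by congr (Amu _ _ _ _ _ (det_to_stoch R (f _))); apply: val_inj; rewrite /= subnn.
Qed.

Lemma prodA_cons l pi (h : {ffun 'I_l -> policy}) : prodA (fcons pi h) = prodA h *m Adet pi.
Proof.
rewrite prodA_behead /fcons ffunE unlift_none; congr (prodA _ *m _).
by apply/ffunP => i; rewrite !ffunE liftK.
Qed.

Lemma prodA_split k n (f : {ffun 'I_(k + n) -> policy}) :
  exists (g : {ffun 'I_n -> policy}) (h : {ffun 'I_k -> policy}), prodA f = prodA g *m prodA h.
Proof.
elim: k f => [|k IH] f; first by exists f, [ffun => [ffun => ord0]]; rewrite prodA0 mulmx1.
have [g [h gh]] := IH (fbehead (f : {ffun 'I_(k + n).+1 -> policy})).
exists g, (fcons (f ord0) h).
by rewrite prodA_cons mulmxA -gh -prodA_behead.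
Qed.

Definition max_opnorm l := \big[Num.max/0]_(f : {ffun 'I_l -> policy}) opnorm2 (prodA f).

Lemma max_opnorm_ge0 l : 0 <= max_opnorm l.
Proof. exact: bigmax_ge_id. Qed.

Lemma norm2_prodA_le l (f : {ffun 'I_l -> policy}) x :
  norm2 (prodA f *m x) <= max_opnorm l * norm2 x.
Proof.
apply: le_trans (norm2_mulmx_le _ _) _; apply: ler_wpM2r; first exact: norm2_ge0.
exact: le_bigmax.
Qed.

Lemma max_opnorm0 : max_opnorm 0 <= 1.
Proof. by apply: bigmax_le => [|f _]; rewrite ?ler01 // prodA0 opnorm2_1. Qed.

Lemma max_opnormD k n : max_opnorm (k + n) <= max_opnorm n * max_opnorm k.
Proof.
apply: bigmax_le => [|f _]; first by rewrite mulr_ge0 ?max_opnorm_ge0.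
have [g [h ->]] := prodA_split f; apply: le_trans (opnorm2M _ _) _.
by apply: ler_pM; rewrite ?opnorm2_ge0 //; exact: le_bigmax.
Qed.

Definition max_norm2sq l (x : 'cV[R]_m) :=
  \big[Num.max/0]_(f : {ffun 'I_l -> policy}) norm2sq (prodA f *m x).

Lemma max_norm2sq_ge0 l x : 0 <= max_norm2sq l x.
Proof. exact: bigmax_ge_id. Qed.

Lemma max_norm2sq_ge l (f : {ffun 'I_l -> policy}) x : norm2sq (prodA f *m x) <= max_norm2sq l x.
Proof. exact: le_bigmax. Qed.

Lemma max_norm2sq0 x : max_norm2sq 0 x = norm2sq x.
Proof.
apply/le_anti; rewrite (le_trans _ (max_norm2sq_ge [ffun => [ffun => ord0]] x)) ?prodA0 ?mul1mx //.
by rewrite andbT; apply: bigmax_le => [|f _]; rewrite ?norm2sq_ge0 // prodA0 mul1mx.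
Qed.

Lemma max_norm2sq_le l x : max_norm2sq l x <= max_opnorm l ^+ 2 * norm2sq x.
Proof.
apply: bigmax_le => [|f _]; first by rewrite mulr_ge0 ?sqr_ge0 ?norm2sq_ge0.
rewrite -!sqr_norm2 -exprMn lerXn2r ?nnegrE ?norm2_ge0 ?mulr_ge0 ?max_opnorm_ge0 ?norm2_ge0 //.
exact: norm2_prodA_le.
Qed.

Lemma max_norm2sqZ c l x : max_norm2sq l (c *: x) = c ^+ 2 * max_norm2sq l x.
Proof.
rewrite /max_norm2sq (big_morph _ (fun y z => maxr_pMr y z (sqr_ge0 c)) (mulr0 _)).
by apply: eq_bigr => f _; rewrite -scalemxAr norm2sqZ.
Qed.

Lemma sqrt_max_norm2sqD l x y :
  Num.sqrt (max_norm2sq l (x + y)) <= Num.sqrt (max_norm2sq l x) + Num.sqrt (max_norm2sq l y).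
Proof.
rewrite -(ger0_norm (addr_ge0 (sqrtr_ge0 _) (sqrtr_ge0 _))) -sqrtr_sqr ler_sqrt ?sqr_ge0 //.
apply: bigmax_le => [|f _]; first exact: sqr_ge0.
rewrite mulmxDr -sqr_norm2 lerXn2r ?nnegrE ?norm2_ge0 ?addr_ge0 ?sqrtr_ge0 //.
apply: le_trans (norm2D _ _) _.
by apply: lerD; rewrite ler_sqrt ?max_norm2sq_ge0 ?max_norm2sq_ge.
Qed.

End PolicyProducts.

Section ConvexMaxDifference.
Variables (R : realType) (I : finType).

Lemma sum_delta_mul (i0 : I) (g : I -> R) : \sum_i (i == i0)%:R * g i = g i0.
Proof. by rewrite (bigD1 i0) //= eqxx mul1r big1 ?addr0 // => i /negbTE ->; rewrite mul0r. Qed.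

Lemma sum_delta (i0 : I) : \sum_i (i == i0)%:R = 1 :> R.
Proof. by rewrite -[RHS](sum_delta_mul i0 (fun => 1)); apply: eq_bigr => i _; rewrite mulr1. Qed.

Lemma bigmax_attained (i0 : I) (u : I -> R) : exists a, \big[Num.max/u i0]_i u i = u a.
Proof.
apply: (big_ind (fun y => exists i, y = u i)); [by exists i0 | | by move=> i _; exists i].
by move=> _ _ [i ->] [j ->]; case: leP; [exists j | exists i].
Qed.

(* [max u - max v] lies between [u a2 - v a2] and [u a1 - v a1] for maximisers
   [a1] of [u] and [a2] of [v], so it is a convex combination of the two *)
Lemma bigmax_sub_convex (i0 : I) (u v : I -> R) :
  exists w : I -> R, [/\ forall i, 0 <= w i, \sum_i w i = 1 &
    \big[Num.max/u i0]_i u i - \big[Num.max/v i0]_i v i = \sum_i w i * (u i - v i)].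
Proof.
have [a1 u_a1] := bigmax_attained i0 u; have [a2 v_a2] := bigmax_attained i0 v.
set D := _ - _; set hi := u a1 - v a1; set lo := u a2 - v a2.
have D_le : D <= hi by rewrite /D u_a1 lerD2l lerN2 le_bigmax.
have D_ge : lo <= D by rewrite /D v_a2 lerD2r le_bigmax.
have [t /andP[t0 t1] Dt] : exists2 t, 0 <= t <= 1 & D = t * hi + (1 - t) * lo.
  have [hilo|hilo] := eqVneq hi lo.
    exists 1; rewrite ?ler01 ?lexx // mul1r subrr mul0r addr0.
    by apply/le_anti; rewrite D_le hilo D_ge.
  have hilo_gt0 : 0 < hi - lo by rewrite subr_gt0 lt_def hilo (le_trans D_ge).
  exists ((D - lo) / (hi - lo)); last by field; rewrite lt0r_neq0.
  apply/andP; split; first by apply: divr_ge0; [rewrite subr_ge0 | exact: ltW].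
  by rewrite ler_pdivrMr // mul1r lerD2r.
exists (fun i => t * (i == a1)%:R + (1 - t) * (i == a2)%:R); split.
- by move=> i; rewrite addr_ge0 ?mulr_ge0 ?ler0n ?subr_ge0.
- by rewrite big_split /= -!mulr_sumr !sum_delta; ring.
under eq_bigr do rewrite mulrDl -!mulrA.
by rewrite big_split /= -!mulr_sumr !sum_delta_mul.
Qed.

End ConvexMaxDifference.

Section StochasticPolicies.
Variables (R : realType) (nS nA m : nat) (P : 'M[R]_(nA.+1 * nS, nS)) (gamma : R)
  (Phi : 'M[R]_(nA.+1 * nS, m)) (d : 'I_(nA.+1 * nS) -> R) (alpha : R).

Local Notation policy := (detpol nS nA).
Local Notation Adet := (Adet P gamma Phi d alpha).
Local Notation max_norm2sq := (max_norm2sq P gamma Phi d alpha).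
Local Notation prodA := (prodA P gamma Phi d alpha).

(* the product measure on [Theta] with marginals [mu s] *)
Definition policy_weight (mu : 'I_nS -> 'I_nA.+1 -> R) (pi : policy) := \prod_s mu s (pi s).

Variable mu : 'I_nS -> 'I_nA.+1 -> R.
Hypothesis mu_stoch : is_stoch_policy mu.

Lemma policy_weight_ge0 pi : 0 <= policy_weight mu pi.
Proof. by apply: prodr_ge0 => s _; exact: mu_stoch.1. Qed.

Lemma sum_policy_weight : \sum_(pi : policy) policy_weight mu pi = 1.
Proof. by rewrite -(bigA_distr_bigA mu) big1 // => s _; exact: mu_stoch.2. Qed.

Lemma policy_weight_marginal s0 (G : 'I_nA.+1 -> R) :
  \sum_(pi : policy) policy_weight mu pi * G (pi s0) = \sum_a mu s0 a * G a.
Proof.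
pose F s a := if s == s0 then mu s a * G a else mu s a.
transitivity (\sum_(pi : policy) \prod_s F s (pi s)).
  apply: eq_bigr => pi _; rewrite /policy_weight (bigD1 s0) //= [RHS](bigD1 s0) //=.
  rewrite [in RHS](eq_bigr (fun s => mu s (pi s))) => [|s /negbTE s_neq]; last by rewrite /F s_neq.
  by rewrite /F eqxx mulrAC.
rewrite -(bigA_distr_bigA F) /= (bigD1 s0) //= [X in _ * X]big1 => [|s /negbTE s_neq].
  by rewrite mulr1 /F eqxx.
by rewrite /F s_neq; exact: mu_stoch.2.
Qed.

Lemma PiMat_convex :
  PiMat mu = \sum_(pi : policy) policy_weight mu pi *: PiMat (det_to_stoch R pi).
Proof.
apply/matrixP => s k; rewrite summxE mxE.
pose G a' := \sum_(a < nA.+1) (if k == sa_idx s a then (a == a')%:R else 0 : R).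
rewrite (eq_bigr (fun pi => policy_weight mu pi * G (pi s))); last by move=> pi _; rewrite !mxE.
rewrite policy_weight_marginal /G.
under [RHS]eq_bigr do rewrite mulr_sumr.
rewrite exchange_big /=; apply: eq_bigr => a _.
case: ifP => _; last by rewrite big1 // => a' _; rewrite mulr0.
rewrite (eq_bigr (fun a' => (a' == a)%:R * mu s a')) ?sum_delta_mul // => a' _.
by rewrite eq_sym mulrC.
Qed.

Lemma Amu_convex : Amu P gamma Phi d alpha mu = \sum_(pi : policy) policy_weight mu pi *: Adet pi.
Proof.
rewrite /Adet /Amu; under [RHS]eq_bigr do rewrite scalerDr.
rewrite big_split /= -scaler_suml sum_policy_weight scale1r; congr (_ + _).
rewrite PiMat_convex mulmx_sumr mulmx_suml scaler_sumr; apply: eq_bigr => pi _.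
by rewrite -scalemxAr -scalemxAl !scalerA mulrC.
Qed.

(* by convexity of [|.|^2], the worst deterministic continuation dominates the average *)
Lemma max_norm2sq_Amu l y :
  max_norm2sq l (Amu P gamma Phi d alpha mu *m y) <= max_norm2sq l.+1 y.
Proof.
apply: bigmax_le => [|f _]; first exact: max_norm2sq_ge0.
rewrite Amu_convex mulmx_suml mulmx_sumr.
rewrite (eq_bigr (fun pi => policy_weight mu pi *: (prodA (fcons pi f) *m y))); last first.
  by move=> pi _; rewrite -scalemxAl -scalemxAr mulmxA prodA_cons.
apply: le_trans (norm2sq_convex _ policy_weight_ge0 sum_policy_weight) _.
apply: le_trans (_ : _ <= \sum_(pi : policy) policy_weight mu pi * max_norm2sq l.+1 y) _.
  by apply: ler_sum => pi _; rewrite ler_wpM2l ?policy_weight_ge0 ?max_norm2sq_ge.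
by rewrite -mulr_suml sum_policy_weight mul1r.
Qed.

End StochasticPolicies.

Section BellmanOperator.
Variables (R : realType) (nS nA m : nat) (P : 'M[R]_(nA.+1 * nS, nS))
  (r : 'I_(nA.+1 * nS) -> 'I_nS -> R) (gamma : R)
  (Phi : 'M[R]_(nA.+1 * nS, m)) (d : 'I_(nA.+1 * nS) -> R) (alpha : R).

Lemma PiMat_mul (mu : 'I_nS -> 'I_nA.+1 -> R) (y : 'cV[R]_(nA.+1 * nS)) s :
  (PiMat mu *m y) s 0 = \sum_a mu s a * y (sa_idx s a) 0.
Proof.
rewrite mxE; under eq_bigr do rewrite mxE mulr_suml.
rewrite exchange_big /=; apply: eq_bigr => a _.
by rewrite (bigD1 (sa_idx s a)) //= eqxx big1 ?addr0 // => k /negbTE ->; rewrite mul0r.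
Qed.

Lemma Vtheta_sub (th th' : 'cV[R]_m) : exists2 mu, is_stoch_policy mu &
  Vtheta Phi th - Vtheta Phi th' = PiMat mu *m (Phi *m (th - th')).
Proof.
have [mu mu_s] := choice (fun s => bigmax_sub_convex ord0
  (fun a => (Phi *m th) (sa_idx s a) 0) (fun a => (Phi *m th') (sa_idx s a) 0)).
exists mu; first by split=> s; have [] := mu_s s.
apply/matrixP => s j; rewrite (ord1 j) PiMat_mul.
rewrite (eq_bigr (fun a => mu s a * ((Phi *m th) (sa_idx s a) 0 - (Phi *m th') (sa_idx s a) 0))).
  by have [_ _ <-] := mu_s s; rewrite !mxE.
by move=> a _; rewrite mulmxBr !mxE.
Qed.

Lemma Talpha_sub (th th' : 'cV[R]_m) : exists2 mu, is_stoch_policy mu &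
  Talpha P r gamma Phi d alpha th - Talpha P r gamma Phi d alpha th' =
  Amu P gamma Phi d alpha mu *m (th - th').
Proof.
have [mu mu_stoch V_sub] := Vtheta_sub th th'; exists mu => //.
rewrite /Talpha /gres /Amu mulmxDl mulmxBl mul1mx -!scalemxAl -!mulmxA -V_sub.
rewrite !(mulmxBr, mulmxDr, mulmxN) -!scalemxAr.
move: (Phi^T *m (Dmat d *m Rexp P r)) => c.
move: (Phi^T *m (Dmat d *m (P *m _))) (Phi^T *m (Dmat d *m (P *m _))) => v v'.
move: (Phi^T *m (Dmat d *m (Phi *m th))) (Phi^T *m (Dmat d *m (Phi *m th'))) => u u'.
apply/matrixP => i j; rewrite !mxE; ring.
Qed.

Lemma Talpha_fixed th : alpha != 0 ->
  (Talpha P r gamma Phi d alpha th = th) <-> (gres P r gamma Phi d th = 0).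
Proof.
move=> alpha_neq0; rewrite /Talpha; split => [/eqP|g0]; last by rewrite g0 scaler0 addr0.
by rewrite addrC -subr_eq0 addrK scaler_eq0 (negbTE alpha_neq0) => /eqP.
Qed.

End BellmanOperator.

(* The library declares completeness and the normed structure of matrices separately. *)
HB.instance Definition _ (R : realType) m n := Complete.on 'M[R]_(m, n).

Lemma iter_contraction_fixed_point (R : realType) (X : completeNormedModType R)
    (f : X -> X) N (q : R) : 0 <= q -> q < 1 ->
  (forall x y, `|iter N f x - iter N f y| <= q * `|x - y|) -> exists x, f x = x.
Proof.
move=> q0 q1 fN.
pose F : {fun [set: X] >-> [set: X]} := totalfun (iter N f).
have F_contract : is_contraction F by exists (NngNum q0); split => // -[x y] _; exact: fN.
have [x _ x_fix] := banach_fixed_point F_contract closedT (ex_intro _ 0 I).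
have {}x_fix : iter N f x = x by [].
exists x; apply/eqP; rewrite -subr_eq0 -normr_le0.
have : `|f x - x| <= q * `|f x - x| by move: (fN (f x) x); rewrite -iterSr iterS x_fix.
by rewrite -subr_le0 -{1}[`|_|]mul1r -mulrBl pmulr_rle0 // subr_gt0.
Qed.

Section EquivalentNorm.
Variables (R : realType) (n : nat).

Lemma mx_norm_le_norm2 (x : 'cV[R]_n) : `|x| <= norm2 x.
Proof.
rewrite [leLHS]/Num.norm /= mx_normrE; apply: bigmax_le => [|[i j] _]; first exact: norm2_ge0.
by rewrite (ord1 j) coord_le_norm2.
Qed.

Lemma norm2_le_mx_norm (x : 'cV[R]_n) : norm2 x <= Num.sqrt n%:R * `|x|.
Proof.
rewrite -[`|x|]ger0_norm // -sqrtr_sqr -sqrtrM ?ler0n // ler_sqrt ?mulr_ge0 ?ler0n ?sqr_ge0 //.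
rewrite /norm2sq mulr_natl -[n in _ *+ n]card_ord -sumr_const; apply: ler_sum => i _.
rewrite -real_normK ?num_real // ler_sqr ?nnegrE //.
rewrite [leRHS]/Num.norm /= mx_normrE; exact: (le_bigmax _ (fun ij => `|x ij.1 ij.2|) (i, 0)).
Qed.

Variables (T : 'cV[R]_n -> 'cV[R]_n) (p : 'cV[R]_n -> R) (beta C : R).
Hypotheses (beta_ge0 : 0 <= beta) (beta_lt1 : beta < 1) (C_ge0 : 0 <= C)
  (T_contract : forall x y, p (T x - T y) <= beta * p (x - y))
  (norm2_le_p : forall x, norm2 x <= p x) (p_le_norm2 : forall x, p x <= C * norm2 x).

(* some iterate of [T] contracts the sup norm of the library, so Banach applies *)
Lemma contraction_fixed_point : exists x, T x = x.
Proof.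
have iterT k x y : p (iter k T x - iter k T y) <= beta ^+ k * p (x - y).
  elim: k => [|k IH]; first by rewrite mul1r.
  by rewrite !iterS exprS -mulrA (le_trans (T_contract _ _)) // ler_wpM2l.
set c := C * Num.sqrt n%:R; have c_ge0 : 0 <= c by rewrite mulr_ge0 ?sqrtr_ge0.
have c1_gt0 : 0 < (c + 1)^-1 by rewrite invr_gt0; lra.
have [N bN] := geometric_lt beta_ge0 beta_lt1 c1_gt0.
apply: (@iter_contraction_fixed_point _ _ T N (beta ^+ N * c)).
- by rewrite mulr_ge0 ?exprn_ge0.
- apply: le_lt_trans (_ : _ <= beta ^+ N * (c + 1)) _; first by rewrite ler_wpM2l ?exprn_ge0 ?lerDl.
  by rewrite -ltr_pdivlMr ?mul1r ?bN //; lra.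
move=> x y; apply: le_trans (mx_norm_le_norm2 _) _; apply: le_trans (norm2_le_p _) _.
apply: le_trans (iterT N x y) _; rewrite /c -mulrA ler_wpM2l ?exprn_ge0 // -mulrA.
by apply: le_trans (p_le_norm2 _) _; rewrite ler_wpM2l // norm2_le_mx_norm.
Qed.

End EquivalentNorm.

Lemma sum_geometric_le (R : realType) (z : R) n : 0 <= z -> z < 1 ->
  \sum_(l < n) z ^+ l <= (1 - z)^-1.
Proof.
move=> z0 z1; elim: n => [|n IH]; first by rewrite big_ord0 invr_ge0 subr_ge0 ltW.
rewrite big_ord_recl expr0.
under eq_bigr do rewrite lift0 exprS.
rewrite -mulr_sumr -[X in _ <= X](_ : 1 + z * (1 - z)^-1 = _); last first.
  by field; rewrite subr_eq0 eq_sym lt_eqF.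
by rewrite lerD2l ler_wpM2l.
Qed.

Lemma ler_sqrt_mul (R : realType) (a b c : R) : 0 <= b -> 0 <= c ->
  a <= c ^+ 2 * b -> Num.sqrt a <= c * Num.sqrt b.
Proof.
move=> b0 c0 ab; rewrite -(ger0_norm c0) -sqrtr_sqr -sqrtrM ?sqr_ge0 //.
by rewrite ler_sqrt // mulr_ge0 ?sqr_ge0.
Qed.

Section Lyapunov.
Variables (R : realType) (nS nA m : nat) (P : 'M[R]_(nA.+1 * nS, nS))
  (r : 'I_(nA.+1 * nS) -> 'I_nS -> R) (gamma : R)
  (Phi : 'M[R]_(nA.+1 * nS, m)) (d : 'I_(nA.+1 * nS) -> R) (alpha beta : R).
Hypothesis beta_gt0 : 0 < beta.

Local Notation max_norm2sq := (max_norm2sq P gamma Phi d alpha).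
Local Notation max_opnorm := (max_opnorm P gamma Phi d alpha).
Local Notation Vt := (Vt P gamma Phi d alpha beta).
Local Notation V := (Vinf P gamma Phi d alpha beta).
Local Notation T := (Talpha P r gamma Phi d alpha).

Let weight_gt0 l : 0 < beta ^- (2 * l).
Proof. by rewrite invr_gt0 exprn_gt0. Qed.

Lemma VtE t x : Vt t x = \sum_(l < t.+1) beta ^- (2 * l) * max_norm2sq l x.
Proof. by []. Qed.

Lemma Vt0 x : Vt 0 x = norm2sq x.
Proof. by rewrite VtE big_ord1 /= muln0 expr0 invr1 mul1r max_norm2sq0. Qed.

Lemma Vt_nondecreasing x : {homo Vt ^~ x : s t / (s <= t)%N >-> s <= t}.
Proof.
apply/nondecreasing_seqP => t; rewrite !VtE [X in _ <= X]big_ord_recr /= lerDl.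
by rewrite mulr_ge0 ?max_norm2sq_ge0 // ltW.
Qed.

Lemma sqrt_VtD t x y : Num.sqrt (Vt t (x + y)) <= Num.sqrt (Vt t x) + Num.sqrt (Vt t y).
Proof.
have sqrtK z : Vt t z = \sum_(l < t.+1) Num.sqrt (beta ^- (2 * l) * max_norm2sq l z) ^+ 2.
  rewrite VtE; apply: eq_bigr => l _.
  by rewrite sqr_sqrtr // mulr_ge0 ?max_norm2sq_ge0 // ltW.
rewrite !sqrtK; apply: minkowski => l; apply/andP; split; first exact: sqrtr_ge0.
have w_ge0 := ltW (weight_gt0 l).
by rewrite !sqrtrM // -mulrDr ler_wpM2l ?sqrtr_ge0 ?sqrt_max_norm2sqD.
Qed.

Lemma VtZ c t x : Vt t (c *: x) = c ^+ 2 * Vt t x.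
Proof. by rewrite !VtE mulr_sumr; apply: eq_bigr => l _; rewrite max_norm2sqZ mulrCA. Qed.

Variables (q K : R).
Hypothesis growth :
  [/\ 0 < q, q < 1, 0 < K & forall n, max_opnorm n <= K * (q * beta) ^+ n].

Let q_gt0 : 0 < q. Proof. by case: growth. Qed.
Let q_lt1 : q < 1. Proof. by case: growth. Qed.
Let K_gt0 : 0 < K. Proof. by case: growth. Qed.
Let max_opnorm_geo n : max_opnorm n <= K * (q * beta) ^+ n. Proof. by case: growth. Qed.

Definition lyap_const := 1 + K ^+ 2 / (1 - q ^+ 2).

Lemma lyap_const_ge1 : 1 <= lyap_const.
Proof. by rewrite lerDl divr_ge0 ?sqr_ge0 // subr_ge0 expr_le1 ?ltW. Qed.

Lemma Vt_le t x : Vt t x <= lyap_const * norm2sq x.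
Proof.
have x0 := norm2sq_ge0 x; have q2_lt1 : q ^+ 2 < 1 by rewrite expr_lt1 ?ltW.
apply: (@le_trans _ _ (\sum_(l < t.+1) K ^+ 2 * norm2sq x * (q ^+ 2) ^+ l)).
  rewrite VtE; apply: ler_sum => l _; rewrite mulrC ler_pdivrMr ?exprn_gt0 //.
  apply: le_trans (max_norm2sq_le _ _ _ _ _ l x) _.
  have opn_ge0 := max_opnorm_ge0 P gamma Phi d alpha l.
  have Kqb_ge0 : 0 <= K * (q * beta) ^+ l by rewrite mulr_ge0 ?exprn_ge0 ?mulr_ge0 // ltW.
  have : max_opnorm l ^+ 2 <= (K * (q * beta) ^+ l) ^+ 2.
    by rewrite ler_sqr ?nnegrE ?max_opnorm_geo.
  move/(ler_wpM2r x0)/le_trans; apply.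
  by rewrite exprM !(exprAC _ 2 l) !exprMn le_eqVlt; apply/orP; left; apply/eqP; ring.
rewrite -mulr_sumr /lyap_const mulrDl mul1r mulrAC -[X in X <= _]add0r lerD //.
by rewrite ler_wpM2r // ler_wpM2l ?sqr_ge0 // sum_geometric_le ?sqr_ge0.
Qed.

Lemma Vt_cvg x : cvgn (Vt ^~ x).
Proof.
apply: nondecreasing_is_cvgn; first exact: Vt_nondecreasing.
by exists (lyap_const * norm2sq x) => _ [t _ <-]; exact: Vt_le.
Qed.

Lemma Vt_le_Vinf t x : Vt t x <= V x.
Proof. by have := nondecreasing_cvgn_le (Vt_nondecreasing x) (@Vt_cvg x) t. Qed.

Lemma Vinf_le_ub x c : (forall t, Vt t x <= c) -> V x <= c.
Proof. by move=> Vt_c; apply: limr_le; [exact: Vt_cvg | exists 0%N]. Qed.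

Lemma norm2sq_le_Vinf x : norm2sq x <= V x.
Proof. by rewrite -Vt0; exact: Vt_le_Vinf. Qed.

Lemma Vinf_ge0 x : 0 <= V x.
Proof. exact: le_trans (norm2sq_ge0 x) (norm2sq_le_Vinf x). Qed.

Lemma Vinf_le x : V x <= lyap_const * norm2sq x.
Proof. by apply: Vinf_le_ub => t; exact: Vt_le. Qed.

Lemma Vinf_eq0 x : V x = 0 -> x = 0.
Proof.
by move=> V0; apply: norm2sq_eq0; apply/le_anti; rewrite norm2sq_ge0 -V0 norm2sq_le_Vinf.
Qed.

Lemma VinfZ c x : V (c *: x) = c ^+ 2 * V x.
Proof.
have VZ_le c' x' : V (c' *: x') <= c' ^+ 2 * V x'.
  by apply: Vinf_le_ub => t; rewrite VtZ ler_wpM2l ?sqr_ge0 ?Vt_le_Vinf.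
apply/le_anti; rewrite VZ_le /=.
have [->|c_neq0] := eqVneq c 0; first by rewrite expr0n mul0r Vinf_ge0.
have := VZ_le c^-1 (c *: x); rewrite scalerA mulVf // scale1r exprVn.
by rewrite -ler_pdivlMl // lt_def sqr_ge0 sqrf_eq0 c_neq0.
Qed.

Lemma sqrt_VinfD x y : Num.sqrt (V (x + y)) <= Num.sqrt (V x) + Num.sqrt (V y).
Proof.
rewrite -(ger0_norm (addr_ge0 (sqrtr_ge0 _) (sqrtr_ge0 _))) -sqrtr_sqr ler_sqrt ?sqr_ge0 //.
have Vt_ge0 t z : 0 <= Vt t z by rewrite (le_trans (norm2sq_ge0 z)) // -Vt0 Vt_nondecreasing.
apply: Vinf_le_ub => t; rewrite -[Vt t (x + y)]sqr_sqrtr //.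
rewrite lerXn2r ?nnegrE ?sqrtr_ge0 ?addr_ge0 //; apply: le_trans (sqrt_VtD t x y) _.
by apply: lerD; rewrite ler_sqrt ?Vinf_ge0 ?Vt_le_Vinf.
Qed.

(* The [l = 0] term of [V x] is [|x|^2]; the remaining terms, shifted by one,
   dominate [V (M x)] up to the factor [beta^2]. *)
Lemma Vinf_contract (M : 'M[R]_m) :
  (forall l y, max_norm2sq l (M *m y) <= max_norm2sq l.+1 y) ->
  forall x, V (M *m x) <= beta ^+ 2 * (V x - norm2sq x).
Proof.
move=> M_shift x; apply: Vinf_le_ub => t.
apply: (@le_trans _ _ (beta ^+ 2 * (Vt t.+1 x - norm2sq x))); last first.
  by rewrite ler_wpM2l ?sqr_ge0 // lerD2r Vt_le_Vinf.
rewrite !VtE [\sum_(l < t.+2) _]big_ord_recl /= muln0 expr0 invr1 mul1r max_norm2sq0.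
rewrite (addrC (norm2sq x)) addrK mulr_sumr; apply: ler_sum => l _.
have -> : beta ^- (2 * l) = beta ^+ 2 * beta ^- (2 * l.+1).
  by rewrite mulnS exprD invfM mulrA mulfV ?mul1r // expf_neq0 // lt0r_neq0.
by rewrite /bump /= add1n -mulrA ler_wpM2l ?sqr_ge0 // ler_wpM2l ?M_shift // ltW.
Qed.

Local Notation C := lyap_const.
Local Notation p := (fun x => Num.sqrt (V x)).

Lemma Vinf_Amu mu : is_stoch_policy mu -> forall x,
  V (Amu P gamma Phi d alpha mu *m x) <= beta ^+ 2 * (V x - norm2sq x).
Proof. by move=> mu_stoch; apply: Vinf_contract; exact: max_norm2sq_Amu. Qed.

Lemma Vinf_Amu_le mu : is_stoch_policy mu -> forall x,
  V (Amu P gamma Phi d alpha mu *m x) <= beta ^+ 2 * V x.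
Proof.
move=> mu_stoch x; apply: le_trans (Vinf_Amu mu_stoch x) _.
by rewrite ler_wpM2l ?sqr_ge0 // lerBlDr lerDl norm2sq_ge0.
Qed.

Lemma sqrt_Vinf_Amu mu : is_stoch_policy mu -> forall x,
  p (Amu P gamma Phi d alpha mu *m x) <= beta * p x.
Proof.
by move=> mu_stoch x; apply: ler_sqrt_mul; [exact: Vinf_ge0 | exact: ltW | exact: Vinf_Amu_le].
Qed.

Lemma Talpha_contract th th' : p (T th - T th') <= beta * p (th - th').
Proof.
by have [mu mu_stoch ->] := Talpha_sub P r gamma Phi d alpha th th'; exact: sqrt_Vinf_Amu.
Qed.

Lemma sqrt_Vinf_eq0 x : p x = 0 -> x = 0.
Proof.
by move/eqP; rewrite sqrtr_eq0 => Vx_le0; apply/Vinf_eq0/le_anti; rewrite Vx_le0 Vinf_ge0.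
Qed.

Lemma is_norm_sqrt_Vinf : is_norm p.
Proof.
split=> [x|x|c x|x y]; first exact: sqrtr_ge0.
- exact: sqrt_Vinf_eq0.
- by rewrite VinfZ sqrtrM ?sqr_ge0 // sqrtr_sqr.
exact: sqrt_VinfD.
Qed.

Lemma norm2_le_sqrt_Vinf x : norm2 x <= p x.
Proof. by rewrite ler_sqrt ?norm2sq_le_Vinf ?Vinf_ge0. Qed.

Lemma sqrt_Vinf_le x : p x <= Num.sqrt C * norm2 x.
Proof.
have C_ge0 : 0 <= C by rewrite (le_trans ler01) ?lyap_const_ge1.
by rewrite -sqrtrM // ler_sqrt ?mulr_ge0 ?norm2sq_ge0 ?Vinf_le.
Qed.

Hypothesis beta_lt1 : beta < 1.

Lemma Talpha_fixed_point : exists th, T th = th.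
Proof.
apply: (contraction_fixed_point (ltW beta_gt0) beta_lt1 (sqrtr_ge0 C)).
- exact: Talpha_contract.
- exact: norm2_le_sqrt_Vinf.
- exact: sqrt_Vinf_le.
Qed.

Lemma Talpha_fixed_point_unique th th' : T th = th -> T th' = th' -> th = th'.
Proof.
move=> Tth Tth'; apply/eqP; rewrite -subr_eq0; apply/eqP/sqrt_Vinf_eq0.
have := Talpha_contract th th'; rewrite Tth Tth'.
move=> pb; apply/le_anti; rewrite sqrtr_ge0 andbT.
have : (1 - beta) * Num.sqrt (V (th - th')) <= 0 by rewrite mulrBl mul1r subr_le0.
by rewrite pmulr_rle0 // subr_gt0.
Qed.

Lemma Vinf_iter th0 th k : T th = th ->
  V (iter k T th0 - th) <= beta ^+ (2 * k) * V (th0 - th).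
Proof.
move=> Tth; elim: k => [|k IH]; first by rewrite muln0 mul1r.
have -> : iter k.+1 T th0 - th = T (iter k T th0) - T th by rewrite iterS Tth.
have [mu mu_stoch ->] := Talpha_sub P r gamma Phi d alpha (iter k T th0) th.
apply: le_trans (Vinf_Amu_le mu_stoch _) _.
by rewrite mulnS exprD -mulrA ler_wpM2l ?sqr_ge0.
Qed.

Lemma norm2_iter th0 th k : T th = th ->
  norm2 (iter k T th0 - th) <= Num.sqrt C * beta ^+ k * norm2 (th0 - th).
Proof.
move=> Tth; apply: le_trans (norm2_le_sqrt_Vinf _) _.
apply: le_trans (_ : _ <= beta ^+ k * p (th0 - th)) _.
  apply: ler_sqrt_mul; [exact: Vinf_ge0 | exact/exprn_ge0/ltW |].
  by rewrite -exprM mulnC; exact: Vinf_iter.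
rewrite (mulrC (Num.sqrt C)) -mulrA.
by apply: ler_wpM2l; [exact/exprn_ge0/ltW | exact: sqrt_Vinf_le].
Qed.

End Lyapunov.

Theorem theorem1 (R : realType) (nS nA m : nat)
  (P : 'M[R]_(nA.+1 * nS, nS)) (r : 'I_(nA.+1 * nS) -> 'I_nS -> R)
  (gamma : R) (Phi : 'M[R]_(nA.+1 * nS, m)) (d : 'I_(nA.+1 * nS) -> R)
  (alpha eps : R) :
  (forall k s', 0 <= P k s') ->
  (forall k, \sum_(s' < nS) P k s' = 1) ->
  0 < gamma -> gamma < 1 ->
  \rank Phi = m ->
  (forall k, 0 < d k) -> \sum_k d k = 1 ->
  0 < alpha -> alpha < 1 ->
  rho_dir P gamma Phi d alpha < 1 ->
  0 < eps ->
  let beta := rho_dir P gamma Phi d alpha + eps in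
  beta < 1 ->
  let V := Vinf P gamma Phi d alpha beta in
  let p := fun x => Num.sqrt (V x) in
  let A := Amu P gamma Phi d alpha in
  let T := Talpha P r gamma Phi d alpha in
  let g := gres P r gamma Phi d in
  (* (i) *)
  (forall x : 'cV[R]_m, cvgn (fun t => Vt P gamma Phi d alpha beta t x)) /\
  exists C : R, 1 <= C /\
  (forall x, norm2sq x <= V x /\ V x <= C * norm2sq x) /\
  (* (ii) *)
  is_norm p /\
  (* (iii) *)
  (forall mu, is_stoch_policy mu -> forall x,
     V (A mu *m x) <= beta ^+ 2 * (V x - norm2sq x) /\
     beta ^+ 2 * (V x - norm2sq x) <= beta ^+ 2 * V x /\
     p (A mu *m x) <= beta * p x) /\
  (* (iv) *)
  (forall th th', p (T th - T th') <= beta * p (th - th')) /\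
  (* (v) and (vi) *)
  exists thstar, g thstar = 0 /\ (forall th, g th = 0 -> th = thstar) /\
  forall (th0 : 'cV[R]_m) (k : nat),
    V (iter k T th0 - thstar) <= beta ^+ (2 * k) * V (th0 - thstar) /\
    norm2 (iter k T th0 - thstar)
      <= Num.sqrt C * beta ^+ k * norm2 (th0 - thstar) /\
    norm2 (Phi *m iter k T th0 - Phi *m thstar)
      <= opnorm2 Phi * Num.sqrt C * beta ^+ k * norm2 (th0 - thstar).
Proof.
move=> _ _ _ _ _ _ _ alpha_gt0 _ _ eps_gt0 beta beta_lt1 V p A T g.
have b_ge0 := max_opnorm_ge0 P gamma Phi d alpha.
have b0_le1 := max_opnorm0 P gamma Phi d alpha.
have bD := max_opnormD P gamma Phi d alpha.
have rho_ge0 : 0 <= rho_dir P gamma Phi d alpha := submult_root_lim_ge0 b_ge0 b0_le1 bD.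
have beta_gt0 : 0 < beta by rewrite /beta; lra.
have rho_lt_beta : rho_dir P gamma Phi d alpha < beta by rewrite /beta; lra.
have [q [K growth]] := submult_geometric_bound b_ge0 b0_le1 bD beta_gt0 rho_lt_beta.
have [ths Tths] := Talpha_fixed_point r beta_gt0 growth beta_lt1.
split; first by move=> x; exact: (Vt_cvg beta_gt0 growth).
exists (lyap_const q K); split; first exact: lyap_const_ge1 growth.
split; first by move=> x; rewrite (norm2sq_le_Vinf beta_gt0 growth) (Vinf_le beta_gt0 growth).
split; first exact: (is_norm_sqrt_Vinf beta_gt0 growth).
split.
  move=> mu mu_stoch x.
  rewrite (Vinf_Amu beta_gt0 growth mu_stoch) (sqrt_Vinf_Amu beta_gt0 growth mu_stoch).
  by rewrite ler_wpM2l ?sqr_ge0 // lerBlDr lerDl norm2sq_ge0.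
split; first exact: (Talpha_contract r beta_gt0 growth).
have alpha_neq0 : alpha != 0 by rewrite lt0r_neq0.
exists ths; split; first exact/(Talpha_fixed _ _ _ _ _ _ alpha_neq0).
split=> [th /(Talpha_fixed _ _ _ _ _ _ alpha_neq0) Tth|th0 k].
  exact: (Talpha_fixed_point_unique beta_gt0 growth beta_lt1 Tth Tths).
have nk := norm2_iter beta_gt0 growth th0 k Tths.
rewrite (Vinf_iter beta_gt0 growth th0 k Tths) nk; split=> //; split=> //.
rewrite -mulmxBr -!mulrA; apply: le_trans (norm2_mulmx_le _ _) _.
by rewrite ler_wpM2l ?opnorm2_ge0 // !mulrA.
Qed.
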